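(* Let $G$ be a graph, $\ell\ge 1$, and let $B\subseteq V(G)$ be an $(\ell-1)$-edge-leaky forcing set of $G$. If $L$ is a set of $k\ge \ell$ edge leaks, then $|L- B^{[\infty]}_L|\le k-\ell$, where $L-S=\{xy\in L: x\notin S \text{ and } y\notin S\}$ for $S\subseteq V(G)$.
   Context: All graphs are finite, simple and undirected. Zero forcing: a blue vertex $u$ with exactly one white neighbor $w$ may force $w$ (color it blue), written $u\to w$. An edge leak is an edge $xy\in E(G)$ across which no force may be performed (neither $x\to y$ nor $y\to x$). $B$ is an $\ell$-edge-leaky forcing set if for every set $L$ of at most $\ell$ edge leaks, exhaustively applying the forcing rule from initial blue set $B$ without forcing across edges of $L$ colors all of $V(G)$ blue (a $0$-edge-leaky forcing set is a zero forcing set). For a set $L$ of edge leaks, $B^{[\infty]}_L$ denotes the set of blue vertices obtained from $B$ after the forcing rule (respecting the leaks $L$) has been applied exhaustively; this set does not depend on the order of forces. *)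

From mathcomp Require Import all_boot.
Set Implicit Arguments. Unset Strict Implicit. Unset Printing Implicit Defensive.

(* A finite simple graph: vertex set T (a finType), adjacency relation g,
   assumed symmetric and irreflexive (hypotheses of the theorem). *)

Definition is_edge (T : finType) (g : rel T) (s : {set T}) : Prop :=
  exists x y, g x y /\ s = [set x; y].

Definition leak_set (T : finType) (g : rel T) (L : {set {set T}}) : Prop :=
  forall s, s \in L -> is_edge g s.

Definition can_force (T : finType) (g : rel T) (L : {set {set T}})
  (S : {set T}) (u w : T) : bool :=
  [&& u \in S, w \notin S, g u w,
      [forall v, (g u v && (v != w)) ==> (v \in S)]
    & [set u; w] \notin L].

Definition force_once (T : finType) (g : rel T) (L : {set {set T}})
  (S : {set T}) : {set T} :=
  match [pick p : T * T | can_force g L S p.1 p.2] with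
  | Some p => p.2 |: S
  | None => S
  end.

(* B^[oo]_L : exhaustively apply the forcing rule; at most #|T| forces
   can occur, so iterating #|T| times reaches the terminal set. *)
Definition leaky_closure (T : finType) (g : rel T) (L : {set {set T}})
  (B : {set T}) : {set T} :=
  iter #|T| (force_once g L) B.

Definition edge_leaky_forcing (T : finType) (g : rel T) (l : nat)
  (B : {set T}) : Prop :=
  forall L : {set {set T}}, leak_set g L -> #|L| <= l ->
    leaky_closure g L B = [set: T].

Definition leak_minus (T : finType) (L : {set {set T}}) (S : {set T})
  : {set {set T}} :=
  [set xy in L | [disjoint xy & S]].

From mathcomp Require Import all_boot.
From mathcomp Require Import zify.
Set Implicit Arguments. Unset Strict Implicit. Unset Printing Implicit Defensive.

(* Let S be the terminal blue set
   B^[oo]_L and M = L - S the leaks with no endpoint in S.  If |M| > k - l,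
   the leak set L' = L \ M has at most l - 1 edges.  S is "stuck" for L
   (no force is possible from S), and removing the leaks M, which touch no
   vertex of S, keeps S stuck: a force u -> w out of S crosses an edge
   containing u \in S, which is a leak of L iff it is a leak of L'.  A stuck
   set containing B contains the L'-closure of B, which is V(G) since B is
   (l-1)-edge-leaky; so S = V(G), hence M is empty, a contradiction. *)

(* An extensive operator on finite sets stabilises after #|T| iterations:
   each non-stationary step strictly increases the cardinality. *)
Lemma iter_extensive_fixpoint (T : finType) (f : {set T} -> {set T})
    (X : {set T}) :
  (forall Y : {set T}, Y \subset f Y) -> f (iter #|T| f X) = iter #|T| f X.
Proof.
move=> f_ext.
have fix_or_big n : f (iter n f X) = iter n f X \/ n <= #|iter n f X|.
  elim: n => [|n [fixn | bign]]; first by right.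
  - by left; rewrite /= fixn fixn.
  - have [fixn | nfixn] := eqVneq (f (iter n f X)) (iter n f X).
      by left; rewrite /= fixn fixn.
    right; apply: leq_ltn_trans bign (proper_card _).
    by rewrite properEneq eq_sym nfixn f_ext.
have [// | bigT] := fix_or_big #|T|.
have -> : iter #|T| f X = setT by apply/eqP; rewrite eqEcard subsetT cardsT.
by apply/eqP; rewrite eqEsubset subsetT f_ext.
Qed.

Lemma force_once_ext (T : finType) (g : rel T) (L : {set {set T}})
    (S : {set T}) :
  S \subset force_once g L S.
Proof. by rewrite /force_once; case: pickP => [p _|_] //; exact: subsetUr. Qed.

Lemma leaky_closure_ext (T : finType) (g : rel T) (L : {set {set T}})
    (B : {set T}) :
  B \subset leaky_closure g L B.
Proof.
rewrite /leaky_closure; elim: #|T| => [|n IHn] //=.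
by apply: subset_trans IHn _; exact: force_once_ext.
Qed.

Definition forcing_stuck (T : finType) (g : rel T) (L : {set {set T}})
    (S : {set T}) : Prop :=
  forall u w, ~~ can_force g L S u w.

Lemma leaky_closure_stuck (T : finType) (g : rel T) (L : {set {set T}})
    (B : {set T}) :
  forcing_stuck g L (leaky_closure g L B).
Proof.
move=> u w; apply/negP => force_uw.
have := iter_extensive_fixpoint B (force_once_ext g L).
rewrite -/(leaky_closure g L B) /force_once; case: pickP => [p force_p|none].
  case/and5P: force_p => _ p2_white _ _ _ closure_eq.
  by move: (setU11 p.2 (leaky_closure g L B)); rewrite closure_eq (negbTE p2_white).
by move: (none (u, w)); rewrite force_uw.
Qed.

Lemma can_force_superset (T : finType) (g : rel T) (L : {set {set T}})
    (X S : {set T}) (u w : T) :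
  X \subset S -> can_force g L X u w -> w \notin S -> can_force g L S u w.
Proof.
move=> XS /and5P[uX _ guw others_blue uw_ok] wS.
rewrite /can_force (subsetP XS u uX) wS guw uw_ok andbT /=.
apply/forallP => v; apply/implyP => gv.
exact: subsetP XS v (implyP (forallP others_blue v) gv).
Qed.

Lemma leaky_closure_least (T : finType) (g : rel T) (L : {set {set T}})
    (B S : {set T}) :
  B \subset S -> forcing_stuck g L S -> leaky_closure g L B \subset S.
Proof.
move=> BS stuck; rewrite /leaky_closure; elim: #|T| => [|n IHn] //=.
rewrite {1}/force_once; case: pickP => [[u w] /= force_uw|_] //.
rewrite subUset IHn andbT sub1set; apply/negPn/negP => wS.
by move/negP: (stuck u w); apply; exact: can_force_superset IHn force_uw wS.
Qed.

(* Leaks with no endpoint in a stuck set S can be removed without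
   unblocking any force from S: a force from S crosses an edge meeting S. *)
Lemma forcing_stuck_drop_far_leaks (T : finType) (g : rel T)
    (L : {set {set T}}) (S : {set T}) :
  forcing_stuck g L S -> forcing_stuck g (L :\: leak_minus L S) S.
Proof.
move=> stuck u w; apply/negP => /and5P[uS wS guw others_blue uw_ok].
move/negP: (stuck u w); apply; rewrite /can_force uS wS guw others_blue /=.
apply: contra uw_ok => uwL; rewrite !inE uwL andbT.
by apply/negP => /pred0P /(_ u); rewrite /= !inE eqxx uS.
Qed.

Lemma leak_minus_setT (T : finType) (g : rel T) (L : {set {set T}}) :
  leak_set g L -> leak_minus L setT = set0.
Proof.
move=> leaks; apply/setP => s; rewrite !inE; apply/negP => /andP[sL].
have [x [y [_ ->]]] := leaks s sL.
by move/pred0P /(_ x); rewrite /= !inE eqxx.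
Qed.

Theorem lemma2p2 (T : finType) (g : rel T)
  (g_sym : symmetric g) (g_irr : irreflexive g)
  (l k : nat) (B : {set T}) (L : {set {set T}}) :
  1 <= l ->
  edge_leaky_forcing g (l - 1) B ->
  leak_set g L -> #|L| = k -> l <= k ->
  #|leak_minus L (leaky_closure g L B)| <= k - l.
Proof.
move=> l_pos B_leaky leaksL cardL l_le_k.
set S := leaky_closure g L B; set M := leak_minus L S.
have [// | many_far] := leqP #|M| (k - l).
have M_sub_L : M \subset L by apply/subsetP => s; rewrite inE => /andP[].
have card_rest : #|L :\: M| <= l - 1.
  by move: (cardsD L M); rewrite (setIidPr M_sub_L); lia.
have leaks_rest : leak_set g (L :\: M) by move=> s /setDP[/leaksL].
have S_full : S = setT.
  apply/eqP; rewrite eqEsubset subsetT -(B_leaky _ leaks_rest card_rest).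
  apply: leaky_closure_least; first exact: leaky_closure_ext.
  exact/forcing_stuck_drop_far_leaks/leaky_closure_stuck.
by move: many_far; rewrite /M S_full (leak_minus_setT leaksL) cards0.
Qed.
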